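(* Let $X,Z\in\mathbb{R}^{n\times r}$ with $XX^{T}\ne ZZ^{T}$. Then $$\delta(X,Z)\ge\max_{t\ge0}\frac{\cos\theta(t)-t}{1+t},$$ where for $t\ge0$, $$\cos\theta(t):=\max_{y,\,W_{i,j}}\left\{\frac{\mathbf{e}^{T}[\mathbf{J}y-w]}{\|\mathbf{e}\|\,\|\mathbf{J}y-w\|}\;:\;\frac{\langle\mathbf{J}^{T}\mathbf{J},W\rangle}{\|\mathbf{e}\|\,\|\mathbf{J}y-w\|}=2t,\;W\succeq0\right\},$$ the maximization being over $y\in\mathbb{R}^{nr}$ and $W_{i,j}\in\mathbb{R}^{n\times n}$ for $i,j\in\{1,\dots,r\}$, with $W=[W_{i,j}]_{i,j=1}^{r}\in\mathbb{R}^{nr\times nr}$ and $w=\sum_{i=1}^{r}\mathrm{vec}(W_{i,i})$.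
   Context: $\mathbf{e}=\mathrm{vec}(XX^{T}-ZZ^{T})\in\mathbb{R}^{n^{2}}$ (column-stacking vectorization) and $\mathbf{J}\in\mathbb{R}^{n^{2}\times nr}$ satisfies $\mathbf{J}\,\mathrm{vec}(Y)=\mathrm{vec}(XY^{T}+YX^{T})$ for all $Y\in\mathbb{R}^{n\times r}$; $\langle A,B\rangle=\mathrm{tr}(A^{T}B)$. A linear map $\mathcal{A}:\mathbb{R}^{n\times n}\to\mathbb{R}^{m}$ satisfies $(\delta,p)$-RIP if $0\le\delta<1$ and there is $\nu>0$ with $(1-\delta)\|E\|_{F}^{2}\le\frac{1}{\nu}\|\mathcal{A}(E)\|^{2}\le(1+\delta)\|E\|_{F}^{2}$ for all $E$ of rank at most $p$. With $r^{\star}=\mathrm{rank}(Z)$, $\delta(X,Z)$ is the infimum of all $\delta$ for which there exist $m\ge1$ and linear $\mathcal{A}:\mathbb{R}^{n\times n}\to\mathbb{R}^{m}$ satisfying $(\delta,r+r^{\star})$-RIP with $\nabla f_{\mathcal{A}}(X)=0$ and $\nabla^{2}f_{\mathcal{A}}(X)\succeq0$, where $f_{\mathcal{A}}(U)=\|\mathcal{A}(UU^{T}-ZZ^{T})\|^{2}$ on $\mathbb{R}^{n\times r}$. *)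

From HB Require Import structures.
From mathcomp Require Import all_boot all_order all_algebra.
From mathcomp Require Import all_classical all_reals all_analysis.
Set Implicit Arguments. Unset Strict Implicit. Unset Printing Implicit Defensive.
Import Order.TTheory GRing.Theory Num.Theory.
Local Open Scope ring_scope.
Local Open Scope classical_set_scope.

Section Defs.
Variable R : realType.

(* column-stacking vectorization: vec A has entry A a j at index j*m + a
   (index (j,a) via mxvec_index), i.e. the columns of A stacked. *)
Definition vec (m k : nat) (A : 'M[R]_(m, k)) : 'cV[R]_(k * m) := (mxvec A^T)^T.

Definition sqnorm (p : nat) (v : 'cV[R]_p) : R := \sum_i (v i 0) ^+ 2.
Definition enorm (p : nat) (v : 'cV[R]_p) : R := Num.sqrt (sqnorm v).

Definition frob2 (m k : nat) (E : 'M[R]_(m, k)) : R := \sum_i \sum_j (E i j) ^+ 2.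

Definition mxinner (m k : nat) (A B : 'M[R]_(m, k)) : R := \tr (A^T *m B).

Definition psd (p : nat) (W : 'M[R]_p) : Prop :=
  W^T = W /\ forall x : 'cV[R]_p, 0 <= (x^T *m W *m x) 0 0.

Definition RIP (n m : nat) (A : {linear 'M[R]_n -> 'cV[R]_m}) (delta : R) (p : nat) : Prop :=
  0 <= delta < 1 /\
  exists nu : R, 0 < nu /\
    forall E : 'M[R]_n, (\rank E <= p)%N ->
      (1 - delta) * frob2 E <= sqnorm (A E) / nu /\
      sqnorm (A E) / nu <= (1 + delta) * frob2 E.

Definition fA (n r m : nat) (A : {linear 'M[R]_n -> 'cV[R]_m}) (Z : 'M[R]_(n, r))
  (U : 'M[R]_(n, r)) : R := sqnorm (A (U *m U^T - Z *m Z^T)).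

Definition grad_zero (n r m : nat) (A : {linear 'M[R]_n -> 'cV[R]_m})
  (X Z : 'M[R]_(n, r)) : Prop :=
  forall Y : 'M[R]_(n, r), derive1 (fun s : R => fA A Z (X + s *: Y)) 0 = 0.

Definition hess_psd (n r m : nat) (A : {linear 'M[R]_n -> 'cV[R]_m})
  (X Z : 'M[R]_(n, r)) : Prop :=
  forall Y : 'M[R]_(n, r), 0 <= derive1n 2 (fun s : R => fA A Z (X + s *: Y)) 0.

Definition admissible_delta (n r : nat) (X Z : 'M[R]_(n, r)) (d : R) : Prop :=
  exists m : nat, (1 <= m)%N /\
    exists A : {linear 'M[R]_n -> 'cV[R]_m},
      RIP A d (r + \rank Z) /\ grad_zero A X Z /\ hess_psd A X Z.

(* delta(X,Z) : infimum (in the extended reals; +oo if no admissible delta) *)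
Definition delta_XZ (n r : nat) (X Z : 'M[R]_(n, r)) : \bar R :=
  ereal_inf [set d%:E | d in admissible_delta X Z].

Definition evec (n r : nat) (X Z : 'M[R]_(n, r)) : 'cV[R]_(n * n) :=
  vec (X *m X^T - Z *m Z^T).

(* block W_{i,j} (n x n) of W in R^{nr x nr}, i,j in {1..r} *)
Definition blk (n r : nat) (W : 'M[R]_(r * n)) (i j : 'I_r) : 'M[R]_n :=
  \matrix_(a < n, b < n) W (mxvec_index i a) (mxvec_index j b).

Definition wvec (n r : nat) (W : 'M[R]_(r * n)) : 'cV[R]_(n * n) :=
  \sum_(i < r) vec (blk W i i).

(* c is the objective value of a feasible point (y, W) of the program
   defining cos theta(t) *)
Definition cos_theta_value (n r : nat) (X Z : 'M[R]_(n, r))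
  (J : 'M[R]_(n * n, r * n)) (t c : R) : Prop :=
  exists (y : 'cV[R]_(r * n)) (W : 'M[R]_(r * n)),
    let e := evec X Z in
    let v := J *m y - wvec W in
    v != 0 /\ psd W /\
    mxinner (J^T *m J) W / (enorm e * enorm v) = 2 * t /\
    c = (e^T *m v) 0 0 / (enorm e * enorm v).

End Defs.

(* Write E := XX^T - ZZ^T and G(Y) := XY^T + YX^T.  First- and second-order
   optimality of X for f_A say <A E, A G(Y)> = 0 and
   |A G(Y)|^2 + 2 <A E, A (YY^T)> >= 0 for every Y.  Factoring W = sum_l l l^T,
   a feasible point (y, W) of the program defining cos theta(t) becomes a
   residual V = G(Y0) - sum_l Y_l Y_l^T with <J^T J, W> = T := sum_l |G(Y_l)|^2.
   Compressing by the orthogonal projector P onto the column spaces of X and Z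
   (of rank at most r + rank Z) fixes E and brings V into the range where RIP
   applies: optimality bounds <A E, A (P V P)> above by nu (1 + delta) T / 2, RIP
   polarization bounds it below by nu (<E, V> - delta |E| |V|).  Hence
   <E, V> <= delta (|E| |V| + T / 2) + T / 2, i.e. delta >= (cos - t) / (1 + t). *)

From HB Require Import structures.
From mathcomp Require Import all_boot all_order all_algebra.
From mathcomp Require Import all_classical all_reals all_analysis.
From mathcomp Require Import ring lra.
Set Implicit Arguments. Unset Strict Implicit. Unset Printing Implicit Defensive.
Import Order.TTheory GRing.Theory Num.Theory.
Local Open Scope ring_scope.

Section FrobeniusInnerProduct.
Variable R : realType.
Implicit Types p q : nat.

Lemma mxinnerE p q (A B : 'M[R]_(p, q)) :
  mxinner A B = \sum_i \sum_j A i j * B i j.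
Proof.
rewrite exchange_big; apply: eq_bigr => j _; rewrite mxE.
by apply: eq_bigr => i _; rewrite mxE.
Qed.

Lemma mxinnerC p q (A B : 'M[R]_(p, q)) : mxinner A B = mxinner B A.
Proof. by rewrite /mxinner -mxtrace_tr trmx_mul trmxK. Qed.

Fact mxinner_is_scalar p q (A : 'M[R]_(p, q)) : scalar (mxinner A).
Proof. by move=> k B C; rewrite /mxinner mulmxDr -scalemxAr mxtraceD mxtraceZ. Qed.

HB.instance Definition _ p q (A : 'M[R]_(p, q)) :=
  GRing.isLinear.Build R 'M[R]_(p, q) R *%R (mxinner A) (mxinner_is_scalar A).

Lemma mxinnerDr p q (A B C : 'M[R]_(p, q)) :
  mxinner A (B + C) = mxinner A B + mxinner A C.
Proof. exact: linearD. Qed.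

Lemma mxinnerBr p q (A B C : 'M[R]_(p, q)) :
  mxinner A (B - C) = mxinner A B - mxinner A C.
Proof. exact: linearB. Qed.

Lemma mxinnerZr p q k (A B : 'M[R]_(p, q)) : mxinner A (k *: B) = k * mxinner A B.
Proof. exact: linearZ. Qed.

Lemma mxinner_sumr p q I (s : seq I) (A : 'M[R]_(p, q)) (F : I -> 'M[R]_(p, q)) :
  mxinner A (\sum_(i <- s) F i) = \sum_(i <- s) mxinner A (F i).
Proof. exact: linear_sum. Qed.

Lemma mxinnerDl p q (A B C : 'M[R]_(p, q)) :
  mxinner (A + B) C = mxinner A C + mxinner B C.
Proof. by rewrite !(mxinnerC _ C) mxinnerDr. Qed.

Lemma mxinnerBl p q (A B C : 'M[R]_(p, q)) :
  mxinner (A - B) C = mxinner A C - mxinner B C.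
Proof. by rewrite !(mxinnerC _ C) mxinnerBr. Qed.

Lemma mxinnerZl p q k (A B : 'M[R]_(p, q)) : mxinner (k *: A) B = k * mxinner A B.
Proof. by rewrite !(mxinnerC _ B) mxinnerZr. Qed.

Lemma frob2E p q (A : 'M[R]_(p, q)) : frob2 A = mxinner A A.
Proof.
by rewrite mxinnerE; apply: eq_bigr => i _; apply: eq_bigr => j _; rewrite expr2.
Qed.

Lemma frob2_ge0 p q (A : 'M[R]_(p, q)) : 0 <= frob2 A.
Proof. by apply: sumr_ge0 => i _; apply: sumr_ge0 => j _; apply: sqr_ge0. Qed.

Lemma frob2_eq0 p q (A : 'M[R]_(p, q)) : (frob2 A == 0) = (A == 0).
Proof.
apply/idP/eqP => [|->]; last first.
  by rewrite /frob2 big1 // => i _; rewrite big1 // => j _; rewrite mxE expr0n.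
have row_ge0 i : 0 <= \sum_j A i j ^+ 2 by apply: sumr_ge0 => j _; apply: sqr_ge0.
move/eqP/(psumr_eq0P (fun i _ => row_ge0 i)) => rows0; apply/matrixP => i j.
have /(psumr_eq0P (fun j _ => sqr_ge0 (A i j)))/(_ j isT)/eqP := rows0 i isT.
by rewrite sqrf_eq0 mxE => /eqP.
Qed.

Lemma frob2_gt0 p q (A : 'M[R]_(p, q)) : (0 < frob2 A) = (A != 0).
Proof. by rewrite lt_def frob2_ge0 frob2_eq0 andbT. Qed.

Lemma sqnormE p (v : 'cV[R]_p) : sqnorm v = frob2 v.
Proof. by apply: eq_bigr => i _; rewrite big_ord1. Qed.

Lemma mxinner_cV p (u v : 'cV[R]_p) : mxinner u v = (u^T *m v) 0 0.
Proof. exact: trace_mx11. Qed.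

Lemma mulmx_trmx_eq0 p q (A : 'M[R]_(p, q)) : (A *m A^T == 0) = (A == 0).
Proof.
apply/eqP/eqP => [AA0|->]; last by rewrite mul0mx.
by apply/eqP; rewrite -trmx_eq0 -frob2_eq0 frob2E /mxinner trmxK AA0 mxtrace0.
Qed.

End FrobeniusInnerProduct.

Section Vectorization.
Variable R : realType.
Implicit Types p q : nat.

Fact vec_is_linear p q : linear (@vec R p q).
Proof. by move=> k A B; rewrite /vec !linearP. Qed.

HB.instance Definition _ p q :=
  GRing.isLinear.Build R 'M[R]_(p, q) 'cV[R]_(q * p) *:%R (@vec R p q)
    (@vec_is_linear p q).

Lemma vecE p q (A : 'M[R]_(p, q)) j i : vec A (mxvec_index j i) 0 = A i j.
Proof. by rewrite /vec mxE mxvecE mxE. Qed.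

Lemma big_mxvec_index p q (F : 'I_(p * q) -> R) :
  \sum_k F k = \sum_(i < p) \sum_(j < q) F (mxvec_index i j).
Proof.
rewrite pair_bigA (reindex (uncurry (@mxvec_index p q))) /=.
  by apply: eq_bigr => -[].
exact: subon_bij (@curry_mxvec_bij p q).
Qed.

Lemma mxinner_vec p q (A B : 'M[R]_(p, q)) : mxinner (vec A) (vec B) = mxinner A B.
Proof.
rewrite !mxinnerE big_mxvec_index exchange_big.
by apply: eq_bigr => i _; apply: eq_bigr => j _; rewrite big_ord1 !vecE.
Qed.

Lemma frob2_vec p q (A : 'M[R]_(p, q)) : frob2 (vec A) = frob2 A.
Proof. by rewrite !frob2E mxinner_vec. Qed.

Definition unvec p q (v : 'cV[R]_(q * p)) : 'M[R]_(p, q) := (vec_mx v^T)^T.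

Lemma unvecK p q : cancel (@unvec p q) (@vec R p q).
Proof. by move=> v; rewrite /vec /unvec trmxK vec_mxK trmxK. Qed.

End Vectorization.

Section QuadraticCurve.
Variables (R : realType) (p q : nat) (a g h : 'M[R]_(p, q)).

Definition frob2_curve_poly : {poly R} :=
  (frob2 a)%:P + (2 * mxinner a g) *: 'X + (frob2 g + 2 * mxinner a h) *: 'X^2
  + (2 * mxinner g h) *: 'X^3 + frob2 h *: 'X^4.

Lemma frob2_curveE :
  (fun s => frob2 (a + s *: g + s ^+ 2 *: h)) = horner frob2_curve_poly.
Proof.
apply/funext => s; rewrite !frob2E !(mxinnerDl, mxinnerZl, mxinnerDr, mxinnerZr).
rewrite !(hornerD, hornerZ, hornerC, hornerXn, hornerX) !frob2E.
by rewrite (mxinnerC g a) (mxinnerC h a) (mxinnerC h g); ring.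
Qed.

Lemma derive1_frob2_curve0 :
  derive1 (fun s => frob2 (a + s *: g + s ^+ 2 *: h)) 0 = 2 * mxinner a g.
Proof.
rewrite frob2_curveE -derivE horner_coef0 coef_deriv.
by rewrite !(coefD, coefZ, coefC, coefXn, coefX) /= !mulr0 !mulr1 !addr0 add0r mulr1n.
Qed.

Lemma derive2_frob2_curve0 :
  derive1n 2 (fun s => frob2 (a + s *: g + s ^+ 2 *: h)) 0 =
  2 * (frob2 g + 2 * mxinner a h).
Proof.
rewrite derive1nS derive1n1 frob2_curveE -!derivE horner_coef0 !coef_deriv.
rewrite !(coefD, coefZ, coefC, coefXn, coefX) /=.
by rewrite !mulr0 !mulr1 !addr0 add0r mulr1n mulr2n; ring.
Qed.

End QuadraticCurve.

Section LossAlongLines.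
Variables (R : realType) (n r m : nat) (A : {linear 'M[R]_n -> 'cV[R]_m}).
Variables (X Z : 'M[R]_(n, r)).
Local Notation E := (X *m X^T - Z *m Z^T).
Local Notation G Y := (X *m Y^T + Y *m X^T).

Lemma fA_line Y s :
  fA A Z (X + s *: Y) = frob2 (A E + s *: A (G Y) + s ^+ 2 *: A (Y *m Y^T)).
Proof.
rewrite /fA sqnormE.
have -> : (X + s *: Y) *m (X + s *: Y)^T - Z *m Z^T =
          E + s *: G Y + s ^+ 2 *: (Y *m Y^T).
  rewrite linearD /= linearZ /= mulmxDl !mulmxDr -!scalemxAl -!scalemxAr.
  by rewrite scalerA -expr2 scalerDr !addrA -!(addrAC _ (- (Z *m Z^T))).
by rewrite !linearD !linearZ.
Qed.

Lemma grad_zero_orthogonal : grad_zero A X Z -> forall Y, mxinner (A E) (A (G Y)) = 0.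
Proof.
move=> gradz Y; have /eqP := gradz Y; under eq_fun do rewrite fA_line.
by rewrite derive1_frob2_curve0 mulf_eq0 pnatr_eq0 => /eqP.
Qed.

Lemma hess_psd_ge0 : hess_psd A X Z ->
  forall Y, 0 <= frob2 (A (G Y)) + 2 * mxinner (A E) (A (Y *m Y^T)).
Proof.
move=> hess Y; have := hess Y; under eq_fun do rewrite fA_line.
by rewrite derive2_frob2_curve0 pmulr_rge0.
Qed.

End LossAlongLines.

Section GramDecomposition.
Variables (R : realType) (N : nat).
Implicit Types (W : 'M[R]_N) (x y : 'cV[R]_N).

Lemma psdP W : psd W <-> W^T = W /\ forall x, 0 <= mxinner x (W *m x).
Proof.
have qE x : (x^T *m W *m x) 0 0 = mxinner x (W *m x) by rewrite mxinner_cV mulmxA.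
by split=> -[sW Wpos]; split=> // x; [rewrite -qE | rewrite qE].
Qed.

Lemma mxinner_delta_cV i x : mxinner (delta_mx i 0) x = x i 0.
Proof. by rewrite mxinner_cV trmx_delta -rowE mxE. Qed.

Lemma mxinner_sym_form W x y : W^T = W -> mxinner x (W *m y) = mxinner y (W *m x).
Proof. by move=> sW; rewrite /mxinner -mxtrace_tr !trmx_mul trmxK sW mulmxA. Qed.

Lemma mxinner_outer x u v : mxinner x (u *m v^T *m x) = mxinner x u * mxinner v x.
Proof.
by rewrite -mulmxA [v^T *m x]mx11_scalar -mxinner_cV mul_mx_scalar linearZ mulrC.
Qed.

Lemma psd_diag_ge0 W i : psd W -> 0 <= W i i.
Proof. by case/psdP=> _ /(_ (delta_mx i 0)); rewrite -colE mxinner_delta_cV mxE. Qed.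

Lemma psd_row_eq0 W i j : psd W -> W i i = 0 -> W i j = 0.
Proof.
case/psdP=> sW Wpos Wii0; apply/eqP; apply: contraT => Wij_neq0.
pose lam := - (`|W j j| + 1) / (2 * W i j).
have := Wpos (lam *: delta_mx i 0 + delta_mx j 0).
rewrite mulmxDr -scalemxAr !(mxinnerDl, mxinnerDr, mxinnerZl, mxinnerZr).
have Wji : W j i = W i j by rewrite -[in LHS]sW mxE.
rewrite -!colE !mxinner_delta_cV !mxE Wji Wii0 !mulr0 add0r.
have -> : lam * W i j = - (`|W j j| + 1) / 2 by rewrite /lam; field.
have := ler_norm (W j j); lra.
Qed.

Lemma psd_schur W i : psd W ->
  psd (W - (W i i)^-1 *: (col i W *m (col i W)^T)).
Proof.
move=> psdW; have /psdP [sW Wpos] := psdW; apply/psdP; split.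
  by rewrite linearB /= linearZ /= trmx_mul trmxK sW.
move=> x; set a := W i i; set c := col i W.
rewrite mulmxBl -scalemxAl mxinnerBr mxinnerZr mxinner_outer (mxinnerC c x).
have [a0|a_neq0] := eqVneq a 0; first by rewrite a0 invr0 mul0r subr0.
set b := mxinner x c; pose k := b / a.
have := Wpos (x - k *: delta_mx i 0).
rewrite mulmxBr -scalemxAr !(mxinnerBl, mxinnerBr, mxinnerZl, mxinnerZr) -colE -/c.
rewrite (mxinner_sym_form (delta_mx i 0) x sW) -colE -/c mxinner_delta_cV mxE -/a -/b.
suff -> : mxinner x (W *m x) - k * b - k * (b - k * a) =
          mxinner x (W *m x) - a^-1 * (b * b) by [].
by rewrite /k; field.
Qed.

Lemma psd_gram_decomposition W : psd W ->
  exists s : seq 'cV[R]_N, W = \sum_(l <- s) l *m l^T.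
Proof.
suff gram_rows_ge : forall k W, psd W ->
    (forall i j : 'I_N, (k <= i)%N -> W i j = 0) ->
    exists s : seq 'cV[R]_N, W = \sum_(l <- s) l *m l^T.
  by move=> psdW; apply: (gram_rows_ge N) => // i j; rewrite leqNgt ltn_ord.
elim=> [|k IHk] {}W psdW Wk.
  by exists [::]; rewrite big_nil; apply/matrixP => i j; rewrite mxE Wk.
have [kN|Nk] := ltnP k N; last first.
  by apply: IHk => // i j ki; have := ltn_ord i; rewrite ltnNge (leq_trans Nk ki).
pose i0 := Ordinal kN; set a := W i0 i0.
(* if a = 0 the junk inverse makes l = 0, harmlessly: row k of W vanishes *)
pose l := (Num.sqrt a)^-1 *: col i0 W.
have ll : l *m l^T = a^-1 *: (col i0 W *m (col i0 W)^T).
  rewrite /l linearZ /= -scalemxAl -scalemxAr scalerA -invfM -expr2.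
  by rewrite sqr_sqrtr // psd_diag_ge0.
have [s Ws] : exists s : seq 'cV[R]_N, W - l *m l^T = \sum_(l <- s) l *m l^T.
  apply: IHk; first by rewrite ll; apply: psd_schur.
  move=> i j ki; rewrite ll !mxE big_ord1 !mxE.
  have [ik|ik] := eqVneq (i : nat) k.
    have -> : i = i0 by apply: val_inj.
    have [a0|a_neq0] := eqVneq a 0.
      by rewrite (psd_row_eq0 j psdW a0) a0 invr0 mul0r subr0.
    have [sW _] := psdW; rewrite -[in W j i0]sW mxE.
    by rewrite -/a mulrA mulVf // mul1r subrr.
  have ki' : (k < i)%N by rewrite ltn_neqAle eq_sym ik.
  by rewrite (Wk i j ki') (Wk i i0 ki') mul0r mulr0 subrr.
by exists (l :: s); rewrite big_cons -Ws addrC subrK.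
Qed.

End GramDecomposition.

Section OrthogonalProjector.
Variable R : realType.

Lemma row_free_gram_unitmx k N (B : 'M[R]_(k, N)) :
  row_free B -> B *m B^T \in unitmx.
Proof.
move=> Bfree; rewrite -row_free_unit -kermx_eq0 -(mulmx_free_eq0 _ Bfree).
rewrite -mulmx_trmx_eq0.
by rewrite trmx_mul mulmxA -[_ *m B *m _]mulmxA mulmx_ker mul0mx.
Qed.

Lemma exists_orthoprojector k N (M : 'M[R]_(k, N)) : exists P : 'M[R]_N,
  [/\ P^T = P, P *m P = P, M *m P = M & (\rank P <= \rank M)%N].
Proof.
have [B [Bfree MB rankB]] : exists B : 'M[R]_(\rank M, N),
    [/\ row_free B, (M <= B)%MS & \rank B = \rank M].
  by exists (row_base M); rewrite row_base_free !eq_row_base.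
pose P := B^T *m invmx (B *m B^T) *m B.
have BP : B *m P = B by rewrite /P !mulmxA mulmxV ?mul1mx ?row_free_gram_unitmx.
exists P; split.
- by rewrite /P !trmx_mul trmxK trmx_inv trmx_mul trmxK mulmxA.
- by rewrite {1}/P -!mulmxA BP mulmxA.
- by have /submxP [D ->] := MB; rewrite -mulmxA BP.
- by rewrite -rankB mxrankM_maxr.
Qed.

End OrthogonalProjector.

Lemma exists_orthoprojector_cols2 (R : realType) n r (X Z : 'M[R]_(n, r)) :
  exists P : 'M[R]_n,
    [/\ P^T = P, P *m P = P, P *m X = X, P *m Z = Z & (\rank P <= r + \rank Z)%N].
Proof.
have [P [sP iP /esym MP rP]] := exists_orthoprojector (col_mx X^T Z^T).
have [XP ZP] := eq_col_mx (etrans MP (mul_col_mx _ _ _)).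
exists P; split=> //; try by apply: trmx_inj; rewrite trmx_mul sP -?XP -?ZP.
rewrite (leq_trans rP) // -addsmxE (leq_trans (mxrank_adds_leqif _ _)) //.
by rewrite !mxrank_tr leq_add2r rank_leq_col.
Qed.

Section Compression.
Variables (R : realType) (n : nat).

Definition compress (P M : 'M[R]_n) := P *m M *m P.

Fact compress_is_linear P : linear (compress P).
Proof. by move=> k M N; rewrite /compress mulmxDr mulmxDl -scalemxAr -scalemxAl. Qed.

HB.instance Definition _ P :=
  GRing.isLinear.Build R 'M[R]_n 'M[R]_n *:%R (compress P) (compress_is_linear P).

Variable P : 'M[R]_n.
Hypotheses (P_sym : P^T = P) (P_idem : P *m P = P).

Lemma compress_mul_tr p (Y1 Y2 : 'M[R]_(n, p)) :
  compress P (Y1 *m Y2^T) = (P *m Y1) *m (P *m Y2)^T.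
Proof. by rewrite /compress trmx_mul P_sym !mulmxA. Qed.

Lemma compressK M : compress P (compress P M) = compress P M.
Proof. by rewrite /compress !mulmxA P_idem -!mulmxA P_idem. Qed.

Lemma mxinner_compress M N : mxinner (compress P M) N = mxinner M (compress P N).
Proof.
by rewrite /mxinner /compress !trmx_mul P_sym -!mulmxA mxtrace_mulC !mulmxA.
Qed.

Lemma frob2_compress_le M : frob2 (compress P M) <= frob2 M.
Proof.
set C := compress P M; set D := M - C.
have orth : mxinner C D = 0 by rewrite mxinner_compress !linearB /= compressK subrr.
have -> : M = C + D by rewrite /D addrC subrK.
clearbody D; rewrite !frob2E mxinnerDl !mxinnerDr orth (mxinnerC D) orth add0r addr0.
by rewrite lerDl -frob2E frob2_ge0.
Qed.

Lemma rank_compress_le M : (\rank (compress P M) <= \rank P)%N.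
Proof. exact: mxrankM_maxr. Qed.

End Compression.

Section RestrictedIsometry.
Variables (R : realType) (n m p : nat) (A : {linear 'M[R]_n -> 'cV[R]_m}) (nu d : R).
Hypothesis nu_gt0 : 0 < nu.
Hypothesis rip : forall M : 'M[R]_n, (\rank M <= p)%N ->
  (1 - d) * frob2 M <= sqnorm (A M) / nu /\ sqnorm (A M) / nu <= (1 + d) * frob2 M.

Lemma rip_frob2_le M : (\rank M <= p)%N -> frob2 (A M) <= nu * (1 + d) * frob2 M.
Proof.
by case/rip=> _; rewrite sqnormE ler_pdivrMr // -[nu * _ * _]mulrA [nu * _]mulrC.
Qed.

Lemma rip_mxinner_ge (E F : 'M[R]_n) mu : 0 < mu ->
  (forall a b : R, (\rank (a *: E + b *: F)%R <= p)%N) ->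
  nu * (mxinner E F - d * (mu * frob2 E + frob2 F / mu) / 2) <= mxinner (A E) (A F).
Proof.
move=> mu_gt0 rankEF.
have [lb _] := rip (rankEF mu 1); have [_ ub] := rip (rankEF mu (-1)).
rewrite scale1r ler_pdivlMr // in lb; rewrite scaleN1r ler_pdivrMr // in ub.
rewrite !sqnormE !frob2E !(linearB, linearD) !linearZ /= in lb ub.
rewrite !(mxinnerBl, mxinnerBr, mxinnerDl, mxinnerDr, mxinnerZl, mxinnerZr) in lb ub.
rewrite (mxinnerC F E) (mxinnerC (A F)) in lb ub; rewrite !frob2E.
set x := mxinner E E in lb ub *; set y := mxinner F F in lb ub *.
set z := mxinner E F in lb ub *; set w := mxinner (A E) (A F) in lb ub *.
set u := mxinner (A E) (A E) in lb ub; set v := mxinner (A F) (A F) in lb ub.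
rewrite -(ler_pM2l (mulr_gt0 (ltr0n _ 4) mu_gt0)).
have -> : 4 * mu * (nu * (z - d * (mu * x + y / mu) / 2)) =
  nu * (4 * mu * z - 2 * d * (mu * mu * x + y)) by field; rewrite gt_eqF.
lra.
Qed.

End RestrictedIsometry.

Section ResidualBound.
Variables (R : realType) (n r m p : nat) (A : {linear 'M[R]_n -> 'cV[R]_m}) (nu d : R).
Variables (X Z : 'M[R]_(n, r)) (P : 'M[R]_n).
Hypotheses (P_sym : P^T = P) (P_idem : P *m P = P) (PX : P *m X = X) (PZ : P *m Z = Z).
Hypotheses (rankP : (\rank P <= p)%N) (nu_gt0 : 0 < nu) (d_ge0 : 0 <= d).
Hypothesis rip : forall M : 'M[R]_n, (\rank M <= p)%N ->
  (1 - d) * frob2 M <= sqnorm (A M) / nu /\ sqnorm (A M) / nu <= (1 + d) * frob2 M.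

Local Notation E := (X *m X^T - Z *m Z^T).
Local Notation G Y := (X *m Y^T + Y *m X^T).

Hypothesis grad : forall Y, mxinner (A E) (A (G Y)) = 0.
Hypothesis hess : forall Y, 0 <= frob2 (A (G Y)) + 2 * mxinner (A E) (A (Y *m Y^T)).

Variables (Y0 : 'M[R]_(n, r)) (Ys : seq 'M[R]_(n, r)).
Local Notation V := (G Y0 - \sum_(Y <- Ys) Y *m Y^T).
Local Notation T := (\sum_(Y <- Ys) frob2 (G Y)).

Lemma compress_E : compress P E = E.
Proof. by rewrite linearB /= !compress_mul_tr // PX PZ. Qed.

Lemma compress_G Y : compress P (G Y) = G (P *m Y).
Proof. by rewrite linearD /= !compress_mul_tr // PX. Qed.

Lemma mxinner_A_compress_residual_le :
  mxinner (A E) (A (compress P V)) <= nu * (1 + d) * T / 2.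
Proof.
rewrite [compress P _]linearB /= compress_G [A (G _ - _)]linearB /=.
rewrite mxinnerBr grad sub0r [compress P _]linear_sum [A (\sum_(_ <- _) _)]linear_sum.
rewrite /= mxinner_sumr -sumrN mulr_sumr mulr_suml; apply: ler_sum => Y _.
have := hess (P *m Y); rewrite -compress_mul_tr //.
have := rip_frob2_le nu_gt0 rip (leq_trans (rank_compress_le P (G Y)) rankP).
have := frob2_compress_le P_sym P_idem (G Y); rewrite compress_G.
have : 0 <= nu * (1 + d) by rewrite mulr_ge0 ?addr_ge0 // ltW.
nra.
Qed.

Lemma residual_inner_le : E != 0 -> V != 0 ->
  mxinner E V <= d * (Num.sqrt (frob2 E) * Num.sqrt (frob2 V) + T / 2) + T / 2.
Proof.
rewrite -!frob2_gt0 => E_gt0 V_gt0.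
set sE := Num.sqrt (frob2 E); set sV := Num.sqrt (frob2 V).
have sE_gt0 : 0 < sE by rewrite sqrtr_gt0.
have sV_gt0 : 0 < sV by rewrite sqrtr_gt0.
have rankEV a b : (\rank (a *: E + b *: compress P V)%R <= p)%N.
  rewrite -[in a *: E]compress_E -!linearZ -linearD.
  exact: leq_trans (rank_compress_le _ _) rankP.
(* the AM-GM weight |V| / |E| balances the two RIP error terms *)
have lb := rip_mxinner_ge nu_gt0 rip (divr_gt0 sV_gt0 sE_gt0) rankEV.
have ub := mxinner_A_compress_residual_le.
have muE : sV / sE * frob2 E = sE * sV.
  by rewrite -[frob2 E]sqr_sqrtr ?ltW // -/sE; field; rewrite gt_eqF.
have muV : frob2 (compress P V) / (sV / sE) <= sE * sV.
  have -> : sE * sV = frob2 V / (sV / sE).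
    by rewrite -[frob2 V]sqr_sqrtr ?ltW // -/sV; field; rewrite !gt_eqF.
  by rewrite ler_pM2r ?invr_gt0 ?divr_gt0 // frob2_compress_le.
have -> : mxinner E V = mxinner E (compress P V).
  by rewrite -[in LHS]compress_E mxinner_compress.
have : mxinner E (compress P V) - d * (sE * sV + frob2 (compress P V) / (sV / sE)) / 2
       <= (1 + d) * T / 2.
  rewrite -(ler_pM2l nu_gt0); apply: le_trans (le_trans ub _); first by rewrite -muE.
  by rewrite !mulrA.
have := ler_wpM2l d_ge0 muV; lra.
Qed.

End ResidualBound.

Section FeasiblePoints.
Variable R : realType.

Lemma sum_blk_outer n r (s : seq 'cV[R]_(r * n)) :
  \sum_(i < r) blk (\sum_(l <- s) l *m l^T) i i =
  \sum_(l <- s) unvec l *m (unvec l)^T.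
Proof.
apply/matrixP => a b; rewrite !summxE; under eq_bigr do rewrite mxE summxE.
rewrite exchange_big; apply: eq_bigr => l _; rewrite mxE; apply: eq_bigr => i _.
by rewrite !mxE big_ord1 !mxE.
Qed.

Lemma wvec_gram n r (s : seq 'cV[R]_(r * n)) :
  wvec (\sum_(l <- s) l *m l^T) = vec (\sum_(l <- s) unvec l *m (unvec l)^T).
Proof. by rewrite -sum_blk_outer linear_sum. Qed.

Lemma mxinner_gram_outer k N (M : 'M[R]_(k, N)) (l : 'cV[R]_N) :
  mxinner (M^T *m M) (l *m l^T) = frob2 (M *m l).
Proof.
by rewrite frob2E /mxinner !trmx_mul trmxK !mulmxA mxtrace_mulC !mulmxA.
Qed.

Variables (n r : nat) (X : 'M[R]_(n, r)) (J : 'M[R]_(n * n, r * n)).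
Hypothesis HJ : forall Y : 'M[R]_(n, r), J *m vec Y = vec (X *m Y^T + Y *m X^T).

Lemma feasible_residual y W : psd W ->
  exists (Y0 : 'M[R]_(n, r)) (Ys : seq 'M[R]_(n, r)),
    J *m y - wvec W = vec (X *m Y0^T + Y0 *m X^T - \sum_(Y <- Ys) Y *m Y^T) /\
    mxinner (J^T *m J) W = \sum_(Y <- Ys) frob2 (X *m Y^T + Y *m X^T).
Proof.
case/psd_gram_decomposition=> s ->; exists (unvec y), (map (@unvec R n r) s); split.
  by rewrite wvec_gram -{1}(unvecK y) HJ big_map [vec (_ - _)]linearB.
rewrite mxinner_sumr big_map; apply: eq_bigr => l _.
by rewrite mxinner_gram_outer -{1}(unvecK l) HJ frob2_vec.
Qed.

End FeasiblePoints.

Lemma cos_gap_le (R : realType) (b z T c t d : R) : 0 < b -> 0 <= t ->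
  c = z / b -> T / b = 2 * t -> z <= d * (b + T / 2) + T / 2 ->
  (c - t) / (1 + t) <= d.
Proof.
move=> b_gt0 t_ge0 cE tE zle.
have zE : z = c * b by rewrite cE divfK ?gt_eqF.
have TE : T = 2 * t * b by rewrite -tE divfK ?gt_eqF.
have {}zle : c * b <= d * (1 + t) * b + t * b.
  by rewrite -zE (_ : _ + t * b = d * (b + T / 2) + T / 2) // TE; field.
have t1_gt0 : 0 < 1 + t by rewrite ltr_wpDr.
by rewrite ler_pdivrMr // -(ler_pM2r b_gt0) mulrBl lerBlDr.
Qed.

Theorem lemma14 (R : realType) (n r : nat) (X Z : 'M[R]_(n, r))
  (J : 'M[R]_(n * n, r * n))
  (HJ : forall Y : 'M[R]_(n, r), J *m vec Y = vec (X *m Y^T + Y *m X^T))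
  (HXZ : X *m X^T != Z *m Z^T) :
  forall (t c : R), 0 <= t -> cos_theta_value X Z J t c ->
    (((c - t) / (1 + t))%:E <= delta_XZ X Z)%E.
Proof.
move=> t c t_ge0 [y [W /= [v_neq0 [psdW [tE cE]]]]].
apply: le_ereal_inf_tmp => _ [d [m [_ [A [rip_A [grad hess]]]]] <-]; rewrite lee_fin.
have [/andP [d_ge0 _] [nu [nu_gt0 rip]]] := rip_A.
have [Y0 [Ys [vE TE]]] := feasible_residual HJ y psdW.
have [P [P_sym P_idem PX PZ rankP]] := exists_orthoprojector_cols2 X Z.
have E_neq0 : X *m X^T - Z *m Z^T != 0 by rewrite subr_eq0.
have V_neq0 : X *m Y0^T + Y0 *m X^T - \sum_(Y <- Ys) Y *m Y^T != 0.
  by apply: contraNneq v_neq0 => V0; rewrite vE V0 linear0.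
rewrite vE TE /evec /enorm !sqnormE !frob2_vec -mxinner_cV mxinner_vec in tE cE.
apply: cos_gap_le t_ge0 cE tE _; first by rewrite mulr_gt0 ?sqrtr_gt0 ?frob2_gt0.
apply: (residual_inner_le P_sym P_idem PX PZ rankP nu_gt0 d_ge0 rip) => //.
  exact: grad_zero_orthogonal.
exact: hess_psd_ge0.
Qed.
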